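(* Let $F$ be an endofunctor on $\mathcal C$ and $\lambda\colon TF\Rightarrow FT$ a distributive law of $\mathcal T$ over $F$. The following are equivalent. 1. $\lambda$ preserves $\mathcal E$. That is, for every object $X$ of $\mathcal C$, $Fq_X\circ\lambda_X\circ l_{FX}=Fq_X\circ\lambda_X\circ r_{FX}\colon EFX\to FT'X$. 2. There is a distributive law $\lambda'\colon T'F\Rightarrow FT'$ of $\mathcal T'$ over $F$ such that $q\colon T\Rightarrow T'$ is a morphism of distributive laws from $\lambda$ to $\lambda'$; this $\lambda'$ is then unique.
   Context: Let $\mathcal C$ be a category and $\Sigma$ an endofunctor on $\mathcal C$. Let $\mathcal T=\langle T,\eta,\mu\rangle$ be the free monad over $\Sigma$. Let $\mathcal E=\langle E,l,r\rangle$ be $\mathcal T$-equations: $E$ an endofunctor on $\mathcal C$ and $l,r\colon E\Rightarrow T$ natural transformations. Standing assumptions: 1. The category $\mathrm{Alg}(\mathcal T)$ of Eilenberg–Moore algebras has coequalizers. 2. The forgetful functor $U$ and $TU$ map regular epis of $\mathrm{Alg}(\mathcal T)$ to epis. 3. $EU$ maps regular epis to epis. For an algebra $\mathbb A=\langle A,\alpha\rangle$, $s_{\mathbb A}\colon\langle A,\alpha\rangle\to\langle A/\mathcal E,\alpha/\mathcal E\rangle$ is a chosen coequalizer in $\mathrm{Alg}(\mathcal T)$ of $\alpha\circ\mu_A\circ Tl_A$ and $\alpha\circ\mu_A\circ Tr_A$. It is the identity if $\alpha\circ l_A=\alpha\circ r_A$. The quotient monad $\mathcal T'=\langle T',\eta',\mu'\rangle$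 is the monad induced by the left adjoint $X\mapsto\langle TX/\mathcal E,\mu_X/\mathcal E\rangle$ of the forgetful functor from the full subcategory of algebras satisfying $\mathcal E$ to $\mathcal C$. We set $q_X=Us_{\langle TX,\mu_X\rangle}\colon TX\to T'X$; $q$ is a monad morphism. A distributive law of a monad $\langle K,\theta,\nu\rangle$ over a functor $F$ is a natural transformation $\kappa\colon KF\Rightarrow FK$ with $\kappa\circ\theta_F=F\theta$ and $\kappa\circ\nu_F=F\nu\circ\kappa_K\circ K\kappa$. For distributive laws $\lambda\colon TF\Rightarrow FT$ and $\kappa\colon KF\Rightarrow FK$, a morphism of distributive laws $\tau\colon\lambda\Rightarrow\kappa$ is a monad morphism $\tau\colon T\Rightarrow K$ (i.e. $\tau\circ\eta=\theta$ and $\tau\circ\mu=\nu\circ K\tau\circ\tau_T$) such that $\kappa\circ\tau_F=F\tau\circ\lambda$. *)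

From Stdlib Require Import IndefiniteDescription.

Record Category := {
  ob :> Type;
  hom : ob -> ob -> Type;
  idm : forall a, hom a a;
  cmp : forall a b c, hom b c -> hom a b -> hom a c;
  cmp_idl : forall a b (f : hom a b), cmp _ _ _ (idm b) f = f;
  cmp_idr : forall a b (f : hom a b), cmp _ _ _ f (idm a) = f;
  cmp_assoc : forall a b c d (h : hom c d) (g : hom b c) (f : hom a b),
      cmp _ _ _ h (cmp _ _ _ g f) = cmp _ _ _ (cmp _ _ _ h g) f }.
Arguments hom {_} _ _.
Arguments idm {_} _.
Arguments cmp {_ _ _ _} _ _.
Arguments cmp_idl {_ _ _} _.
Arguments cmp_idr {_ _ _} _.
Arguments cmp_assoc {_ _ _ _ _} _ _ _.
Notation "g ∘ f" := (cmp g f) (at level 40, left associativity).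

Definition epi {C : Category} {a b : C} (f : hom a b) : Prop :=
  forall (c : C) (g h : hom b c), g ∘ f = h ∘ f -> g = h.

Record Functor (C : Category) := {
  fobj :> C -> C;
  fmap : forall a b : C, hom a b -> hom (fobj a) (fobj b) }.
Arguments fobj {C} _ _.
Arguments fmap {C} _ {a b} _.

Record is_functor {C : Category} (F : Functor C) : Prop := {
  fmap_id : forall a, fmap F (idm a) = idm (F a);
  fmap_comp : forall a b c (g : hom b c) (f : hom a b),
      fmap F (g ∘ f) = fmap F g ∘ fmap F f }.

Definition is_natural {C : Category} {F G : Functor C}
  (t : forall X : C, hom (F X) (G X)) : Prop :=
  forall (X Y : C) (f : hom X Y), t Y ∘ fmap F f = fmap G f ∘ t X.

Record Monad (C : Category) := {
  mT :> Functor C;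
  munit : forall X : C, hom X (mT X);
  mmult : forall X : C, hom (mT (mT X)) (mT X) }.
Arguments mT {C} _.
Arguments munit {C} _ _.
Arguments mmult {C} _ _.

Record is_monad {C : Category} (M : Monad C) : Prop := {
  mon_functor : is_functor M;
  unit_nat : forall X Y (f : hom X Y), munit M Y ∘ f = fmap M f ∘ munit M X;
  mult_nat : forall X Y (f : hom X Y),
      mmult M Y ∘ fmap M (fmap M f) = fmap M f ∘ mmult M X;
  mon_unitl : forall X, mmult M X ∘ munit M (M X) = idm (M X);
  mon_unitr : forall X, mmult M X ∘ fmap M (munit M X) = idm (M X);
  mon_assoc : forall X, mmult M X ∘ mmult M (M X) = mmult M X ∘ fmap M (mmult M X) }.

Definition is_monad_morphism {C : Category} (M K : Monad C)
  (tau : forall X : C, hom (M X) (K X)) : Prop :=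
  is_natural (F := M) (G := K) tau /\
  (forall X, tau X ∘ munit M X = munit K X) /\
  (forall X, tau X ∘ mmult M X = mmult K X ∘ fmap K (tau X) ∘ tau (M X)).

Definition is_free_monad {C : Category} (S : Functor C) (M : Monad C) : Prop :=
  exists sigma : forall X : C, hom (S X) (M X),
    is_natural (F := S) (G := M) sigma /\
    forall K : Monad C, is_monad K ->
    forall phi : forall X : C, hom (S X) (K X), is_natural (F := S) (G := K) phi ->
      exists tau : forall X : C, hom (M X) (K X),
        is_monad_morphism M K tau /\ (forall X, tau X ∘ sigma X = phi X) /\
        (forall tau' : forall X : C, hom (M X) (K X),
            is_monad_morphism M K tau' -> (forall X, tau' X ∘ sigma X = phi X) ->
            forall X, tau' X = tau X).

Definition is_dist_law {C : Category} (K : Monad C) (F : Functor C)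
  (kappa : forall X : C, hom (K (F X)) (F (K X))) : Prop :=
  (forall X Y (f : hom X Y), kappa Y ∘ fmap K (fmap F f) = fmap F (fmap K f) ∘ kappa X) /\
  (forall X, kappa X ∘ munit K (F X) = fmap F (munit K X)) /\
  (forall X, kappa X ∘ mmult K (F X) =
             fmap F (mmult K X) ∘ kappa (K X) ∘ fmap K (kappa X)).

Definition is_dist_law_morphism {C : Category} (M K : Monad C) (F : Functor C)
  (lam : forall X : C, hom (M (F X)) (F (M X)))
  (kappa : forall X : C, hom (K (F X)) (F (K X)))
  (tau : forall X : C, hom (M X) (K X)) : Prop :=
  is_monad_morphism M K tau /\ (forall X, kappa X ∘ tau (F X) = fmap F (tau X) ∘ lam X).

Record Alg {C : Category} (T : Monad C) := {
  car : C;
  act : hom (T car) car;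
  act_unit : act ∘ munit T car = idm car;
  act_mult : act ∘ mmult T car = act ∘ fmap T act }.
Arguments car {C T} _.
Arguments act {C T} _.
Arguments act_unit {C T} _.
Arguments act_mult {C T} _.

Record AlgHom {C : Category} {T : Monad C} (A B : Alg T) := {
  ah : hom (car A) (car B);
  ah_comm : ah ∘ act A = act B ∘ fmap T ah }.
Arguments ah {C T A B} _.
Arguments ah_comm {C T A B} _.

Definition is_coeq {C : Category} {T : Monad C} {Y : C} {B Q : Alg T}
  (f g : hom Y (car B)) (e : AlgHom B Q) : Prop :=
  ah e ∘ f = ah e ∘ g /\
  forall (Z : Alg T) (h : AlgHom B Z), ah h ∘ f = ah h ∘ g ->
    exists u : AlgHom Q Z, ah u ∘ ah e = ah h /\
      forall u' : AlgHom Q Z, ah u' ∘ ah e = ah h -> ah u' = ah u.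

Definition alg_has_coequalizers {C : Category} (T : Monad C) : Prop :=
  forall (A B : Alg T) (f g : AlgHom A B),
    exists (Q : Alg T) (e : AlgHom B Q), is_coeq (ah f) (ah g) e.

Definition regular_epi {C : Category} {T : Monad C} {A B : Alg T}
  (e : AlgHom A B) : Prop :=
  exists (Z : Alg T) (f g : AlgHom Z A), is_coeq (ah f) (ah g) e.

Section Helpers.
Context {C : Category} {T : Monad C} (HT : is_monad T).

Lemma rw2 {a b c d : C} (f : hom a b) (g : hom b c) (h : hom a c) (k : hom d a) :
  g ∘ f = h -> g ∘ (f ∘ k) = h ∘ k.
Proof. intros H. rewrite cmp_assoc, H. reflexivity. Qed.

Definition freeAlg (X : C) : Alg T :=
  {| car := T X; act := mmult T X;
     act_unit := mon_unitl T HT X; act_mult := mon_assoc T HT X |}.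

Lemma alg_id_comm (A : Alg T) : idm (car A) ∘ act A = act A ∘ fmap T (idm (car A)).
Proof. rewrite (fmap_id _ (mon_functor _ HT)), cmp_idl, cmp_idr. reflexivity. Qed.

Definition alg_id (A : Alg T) : AlgHom A A :=
  {| ah := idm (car A); ah_comm := alg_id_comm A |}.

Lemma alg_comp_comm {A B D : Alg T} (g : AlgHom B D) (f : AlgHom A B) :
  (ah g ∘ ah f) ∘ act A = act D ∘ fmap T (ah g ∘ ah f).
Proof.
  rewrite <- cmp_assoc, (ah_comm f), cmp_assoc, (ah_comm g), <- cmp_assoc,
    (fmap_comp _ (mon_functor _ HT)). reflexivity.
Qed.

Definition alg_comp {A B D : Alg T} (g : AlgHom B D) (f : AlgHom A B) : AlgHom A D :=
  {| ah := ah g ∘ ah f; ah_comm := alg_comp_comm g f |}.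

Lemma free_map_comm {X Y : C} (f : hom X Y) :
  fmap T f ∘ act (freeAlg X) = act (freeAlg Y) ∘ fmap T (fmap T f).
Proof. simpl. symmetry. apply (mult_nat T HT). Qed.

Definition free_map {X Y : C} (f : hom X Y) : AlgHom (freeAlg X) (freeAlg Y) :=
  Build_AlgHom _ _ (freeAlg X) (freeAlg Y) (fmap T f) (free_map_comm f).

Definition act_alg (B : Alg T) : AlgHom (freeAlg (car B)) B :=
  Build_AlgHom _ _ (freeAlg (car B)) B (act B) (act_mult B).

Lemma ext_comm (A : Alg T) {Y : C} (k : hom Y (T (car A))) :
  (act A ∘ mmult T (car A) ∘ fmap T k) ∘ act (freeAlg Y) =
  act A ∘ fmap T (act A ∘ mmult T (car A) ∘ fmap T k).
Proof.
  simpl. pose proof (mon_functor _ HT) as FT.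
  rewrite <- !cmp_assoc, <- (mult_nat T HT).
  rewrite !(fmap_comp _ FT), !cmp_assoc. f_equal.
  rewrite <- (act_mult A), <- cmp_assoc, (mon_assoc T HT), cmp_assoc. reflexivity.
Qed.

Definition ext_alg (A : Alg T) {Y : C} (k : hom Y (T (car A))) : AlgHom (freeAlg Y) A :=
  Build_AlgHom _ _ (freeAlg Y) A (act A ∘ mmult T (car A) ∘ fmap T k) (ext_comm A k).

Lemma coeq_ex {Y : C} {B Q : Alg T} {f g : hom Y (car B)} {e : AlgHom B Q}
  (H : is_coeq f g e) {Z : Alg T} (h : AlgHom B Z) (Hh : ah h ∘ f = ah h ∘ g) :
  exists u : AlgHom Q Z, ah u ∘ ah e = ah h.
Proof. destruct (proj2 H Z h Hh) as [u [Hu _]]. exists u. exact Hu. Qed.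

Definition coeq_factor {Y : C} {B Q : Alg T} {f g : hom Y (car B)} {e : AlgHom B Q}
  (H : is_coeq f g e) {Z : Alg T} (h : AlgHom B Z) (Hh : ah h ∘ f = ah h ∘ g) :
  AlgHom Q Z := proj1_sig (constructive_indefinite_description _ (coeq_ex H h Hh)).

End Helpers.

Section Quotient.
Context {C : Category} {T : Monad C} (HT : is_monad T) {E : Functor C}
  (l r : forall X : C, hom (E X) (T X)).

Definition chosen_coequalizers (quot : forall A : Alg T, {Q : Alg T & AlgHom A Q}) : Prop :=
  forall A : Alg T,
    is_coeq (act A ∘ mmult T (car A) ∘ fmap T (l (car A)))
            (act A ∘ mmult T (car A) ∘ fmap T (r (car A)))
            (projT2 (quot A)).

Definition satisfies_eqs (A : Alg T) : Prop := act A ∘ l (car A) = act A ∘ r (car A).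

Variable quot : forall A : Alg T, {Q : Alg T & AlgHom A Q}.

Definition Lalg (X : C) : Alg T := projT1 (quot (freeAlg HT X)).
Definition Tq_obj (X : C) : C := car (Lalg X).
Definition qmap (X : C) : hom (T X) (Tq_obj X) := ah (projT2 (quot (freeAlg HT X))).

Hypothesis Hl : is_natural (F := E) (G := T) l.
Hypothesis Hr : is_natural (F := E) (G := T) r.
Hypothesis Hquot : chosen_coequalizers quot.

Lemma Lmap_aux (k : forall X : C, hom (E X) (T X)) (Hk : is_natural (F := E) (G := T) k)
  {X Y : C} (f : hom X Y) :
  (qmap Y ∘ fmap T f) ∘ (mmult T X ∘ mmult T (T X) ∘ fmap T (k (T X))) =
  (qmap Y ∘ (mmult T Y ∘ mmult T (T Y) ∘ fmap T (k (T Y)))) ∘ fmap T (fmap E (fmap T f)).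
Proof.
  pose proof (mon_functor _ HT) as FT.
  rewrite <- !cmp_assoc. f_equal.
  rewrite (rw2 _ _ _ _ (eq_sym (mult_nat T HT _ _ f))), <- !cmp_assoc.
  rewrite (rw2 _ _ _ _ (eq_sym (mult_nat T HT _ _ (fmap T f)))), <- !cmp_assoc.
  f_equal. f_equal.
  rewrite <- !(fmap_comp _ FT). f_equal. symmetry. apply Hk.
Qed.

Lemma Lmap_coeq {X Y : C} (f : hom X Y) :
  ah (alg_comp HT (projT2 (quot (freeAlg HT Y))) (free_map HT f)) ∘
    (act (freeAlg HT X) ∘ mmult T (car (freeAlg HT X)) ∘ fmap T (l (car (freeAlg HT X)))) =
  ah (alg_comp HT (projT2 (quot (freeAlg HT Y))) (free_map HT f)) ∘
    (act (freeAlg HT X) ∘ mmult T (car (freeAlg HT X)) ∘ fmap T (r (car (freeAlg HT X)))).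
Proof.
  etransitivity; [exact (Lmap_aux l Hl f)|].
  etransitivity; [|symmetry; exact (Lmap_aux r Hr f)].
  f_equal. exact (proj1 (Hquot (freeAlg HT Y))).
Qed.

Definition Lhom {X Y : C} (f : hom X Y) : AlgHom (Lalg X) (Lalg Y) :=
  coeq_factor (Hquot (freeAlg HT X))
    (alg_comp HT (projT2 (quot (freeAlg HT Y))) (free_map HT f)) (Lmap_coeq f).

Definition Tq_map {X Y : C} (f : hom X Y) : hom (Tq_obj X) (Tq_obj Y) := ah (Lhom f).

Lemma eps_aux (B : Alg T) (k : forall X : C, hom (E X) (T X))
  (Hk : is_natural (F := E) (G := T) k) :
  act B ∘ (mmult T (car B) ∘ mmult T (T (car B)) ∘ fmap T (k (T (car B)))) =
  act B ∘ fmap T (act B ∘ k (car B) ∘ fmap E (act B)).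
Proof.
  pose proof (mon_functor _ HT) as FT.
  rewrite <- !cmp_assoc.
  rewrite (rw2 _ _ _ _ (mon_assoc T HT (car B))), <- !cmp_assoc.
  rewrite (rw2 _ _ _ _ (act_mult B)), <- !cmp_assoc.
  f_equal. rewrite <- !(fmap_comp _ FT). f_equal.
  rewrite (rw2 _ _ _ _ (act_mult B)), <- cmp_assoc, <- Hk, cmp_assoc. reflexivity.
Qed.

Lemma eps_coeq (B : Alg T) (Hsat : satisfies_eqs B) :
  ah (act_alg HT B) ∘
    (act (freeAlg HT (car B)) ∘ mmult T (car (freeAlg HT (car B))) ∘
       fmap T (l (car (freeAlg HT (car B))))) =
  ah (act_alg HT B) ∘
    (act (freeAlg HT (car B)) ∘ mmult T (car (freeAlg HT (car B))) ∘
       fmap T (r (car (freeAlg HT (car B))))).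
Proof.
  etransitivity; [exact (eps_aux B l Hl)|].
  etransitivity; [|symmetry; exact (eps_aux B r Hr)].
  unfold satisfies_eqs in Hsat. rewrite Hsat. reflexivity.
Qed.

Definition eps (B : Alg T) (Hsat : satisfies_eqs B) : AlgHom (Lalg (car B)) B :=
  coeq_factor (Hquot (freeAlg HT (car B))) (act_alg HT B) (eps_coeq B Hsat).

Lemma LE_aux (X : C) (k : forall X : C, hom (E X) (T X))
  (Hk : is_natural (F := E) (G := T) k) :
  act (Lalg X) ∘ k (car (Lalg X)) ∘ fmap E (qmap X) =
  (qmap X ∘ (mmult T X ∘ mmult T (T X) ∘ fmap T (k (T X)))) ∘ munit T (E (T X)).
Proof.
  unfold qmap, Lalg, Tq_obj.
  rewrite <- cmp_assoc, Hk, cmp_assoc.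
  pose proof (ah_comm (projT2 (quot (freeAlg HT X)))) as Hc. simpl in Hc.
  rewrite <- Hc.
  rewrite <- !cmp_assoc. f_equal. f_equal.
  rewrite <- (unit_nat T HT), cmp_assoc, (mon_unitl T HT), cmp_idl. reflexivity.
Qed.

Hypothesis HEU : forall (A B : Alg T) (e : AlgHom A B), regular_epi e -> epi (fmap E (ah e)).

Lemma LE (X : C) : satisfies_eqs (Lalg X).
Proof.
  unfold satisfies_eqs.
  assert (Hreg : regular_epi (projT2 (quot (freeAlg HT X)))).
  { exists (freeAlg HT (E (car (freeAlg HT X)))).
    exists (ext_alg HT (freeAlg HT X) (l _)), (ext_alg HT (freeAlg HT X) (r _)).
    exact (Hquot (freeAlg HT X)). }
  apply (HEU _ _ _ Hreg).
  etransitivity; [exact (LE_aux X l Hl)|].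
  etransitivity; [|symmetry; exact (LE_aux X r Hr)].
  f_equal. exact (proj1 (Hquot (freeAlg HT X))).
Qed.

Definition Tq_mult (X : C) : hom (Tq_obj (Tq_obj X)) (Tq_obj X) :=
  ah (eps (Lalg X) (LE X)).

Definition Tq_unit (X : C) : hom X (Tq_obj X) := qmap X ∘ munit T X.

(* the quotient monad T' = U L, with unit q . eta and multiplication U eps L *)
Definition quotient_monad : Monad C :=
  {| mT := {| fobj := Tq_obj; fmap := fun X Y f => Tq_map f |};
     munit := Tq_unit; mmult := Tq_mult |}.

End Quotient.

From Stdlib Require Import IndefiniteDescription.

(* Every T-algebra A lifts along λ to the algebra (F A, F a ∘ λ_A), and F q_X ∘ λ_X is
   an algebra map from the free algebra on F X into the lift of T'X. Preservation of E
   says exactly that it coequalizes the pair μ ∘ T l, μ ∘ T r defining q_{FX}, so it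
   factors as λ'_X ∘ q_{FX}; the laws of λ' are inherited from those of λ because q and
   T q are epi, and so is uniqueness. Conversely, λ' ∘ q_F = F q ∘ λ turns preservation
   into q ∘ l = q ∘ r, which holds because q coequalizes μ ∘ T l and μ ∘ T r. *)

(* Objects such as [T' X] and [car (Lalg HT quot X)] are convertible but not
   syntactically equal; keyed unification lets [rewrite] match up to conversion. *)
Set Keyed Unification.

Ltac rassoc := repeat rewrite <- cmp_assoc.

Lemma cmp_eq_tail {C : Category} {a b d : C} {g h : hom a b} (H : g = h) (k : hom d a) :
  g ∘ k = h ∘ k.
Proof. now rewrite H. Qed.

(* Rewrites with an equation between composites inside a right-associated chain,
   where its left-hand side may be followed by a tail [_ ∘ k]. *)
Ltac crewrite H :=
  let H' := fresh in
  first [ pose proof H as H'; repeat rewrite <- cmp_assoc in H'; rewrite H'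
        | epose proof (cmp_eq_tail H _) as H'; repeat rewrite <- cmp_assoc in H'; rewrite H' ];
  clear H'; rassoc.

Lemma epi_cmp {C : Category} {a b c : C} (g : hom b c) (f : hom a b) :
  epi g -> epi f -> epi (g ∘ f).
Proof. intros Hg Hf d x y Hxy. apply Hg, Hf. now rassoc. Qed.

Lemma fmap_cmp {C : Category} {G : Functor C} (HG : is_functor G)
  {a b c : C} (g : hom b c) (f : hom a b) :
  fmap G g ∘ fmap G f = fmap G (g ∘ f).
Proof. symmetry. apply (fmap_comp _ HG). Qed.

Lemma coeq_factorK {C : Category} {T : Monad C} {Y : C} {B Q : Alg T}
  {f g : hom Y (car B)} {e : AlgHom B Q}
  (H : is_coeq f g e) {Z : Alg T} (h : AlgHom B Z) (Hh : ah h ∘ f = ah h ∘ g) :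
  ah (coeq_factor H h Hh) ∘ ah e = ah h.
Proof.
  unfold coeq_factor. now destruct (constructive_indefinite_description _ _) as [u Hu].
Qed.

Section LiftedAlgebra.
Context {C : Category} {T : Monad C} (HT : is_monad T) {F : Functor C} (HF : is_functor F)
  (lam : forall X : C, hom (T (F X)) (F (T X))) (Hlam : is_dist_law T F lam).

Lemma lift_act_unit (A : Alg T) :
  (fmap F (act A) ∘ lam (car A)) ∘ munit T (F (car A)) = idm (F (car A)).
Proof.
  rassoc. rewrite (proj1 (proj2 Hlam)), (fmap_cmp HF), (act_unit A). apply (fmap_id _ HF).
Qed.

Lemma lift_act_mult (A : Alg T) :
  (fmap F (act A) ∘ lam (car A)) ∘ mmult T (F (car A)) =
  (fmap F (act A) ∘ lam (car A)) ∘ fmap T (fmap F (act A) ∘ lam (car A)).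
Proof.
  rassoc. crewrite (proj2 (proj2 Hlam)). crewrite (fmap_cmp HF (act A) (mmult T (car A))).
  rewrite (act_mult A), (fmap_comp _ HF). rassoc.
  crewrite (eq_sym (proj1 Hlam _ _ (act A))).
  now rewrite (fmap_comp _ (mon_functor _ HT) _ _ _ (fmap F (act A))).
Qed.

Definition lift_alg (A : Alg T) : Alg T :=
  {| car := F (car A); act := fmap F (act A) ∘ lam (car A);
     act_unit := lift_act_unit A; act_mult := lift_act_mult A |}.

Lemma lift_hom_comm {A B : Alg T} (h : AlgHom A B) :
  fmap F (ah h) ∘ act (lift_alg A) = act (lift_alg B) ∘ fmap T (fmap F (ah h)).
Proof.
  cbn. rassoc. crewrite (fmap_cmp HF (ah h) (act A)).
  rewrite (ah_comm h), (fmap_comp _ HF). rassoc. now rewrite (proj1 Hlam).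
Qed.

Definition lift_hom {A B : Alg T} (h : AlgHom A B) : AlgHom (lift_alg A) (lift_alg B) :=
  Build_AlgHom _ _ (lift_alg A) (lift_alg B) (fmap F (ah h)) (lift_hom_comm h).

Lemma dist_law_hom_comm (X : C) :
  lam X ∘ act (freeAlg HT (F X)) = act (lift_alg (freeAlg HT X)) ∘ fmap T (lam X).
Proof. cbn. rewrite (proj2 (proj2 Hlam)). now rassoc. Qed.

Definition dist_law_hom (X : C) : AlgHom (freeAlg HT (F X)) (lift_alg (freeAlg HT X)) :=
  Build_AlgHom _ _ (freeAlg HT (F X)) (lift_alg (freeAlg HT X)) (lam X) (dist_law_hom_comm X).

End LiftedAlgebra.

Lemma free_pair_at_units {C : Category} {T : Monad C} (HT : is_monad T) {E : Functor C}
  (k : forall X : C, hom (E X) (T X)) (Hk : is_natural (F := E) (G := T) k) (Y : C) :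
  mmult T Y ∘ mmult T (T Y) ∘ fmap T (k (T Y)) ∘ munit T (E (T Y)) ∘ fmap E (munit T Y) = k Y.
Proof.
  rassoc. crewrite (eq_sym (unit_nat T HT _ _ (k (T Y)))).
  crewrite (mon_unitl T HT (T Y)). rewrite cmp_idl, Hk, cmp_assoc, (mon_unitr T HT).
  apply cmp_idl.
Qed.

Lemma free_hom_pair {C : Category} {T : Monad C} (HT : is_monad T) {E : Functor C}
  (k : forall X : C, hom (E X) (T X)) {Y : C} {B : Alg T} (h : AlgHom (freeAlg HT Y) B) :
  ah h ∘ (mmult T Y ∘ mmult T (T Y) ∘ fmap T (k (T Y))) =
  act B ∘ fmap T (ah h ∘ mmult T Y ∘ k (T Y)).
Proof.
  rassoc. crewrite (mon_assoc T HT Y). crewrite (ah_comm h).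
  now rewrite !(fmap_comp _ (mon_functor _ HT)).
Qed.

Section QuotientMonad.
Context {C : Category} {T : Monad C} (HT : is_monad T) {E : Functor C}
  (l r : forall X : C, hom (E X) (T X))
  (Hl : is_natural (F := E) (G := T) l) (Hr : is_natural (F := E) (G := T) r)
  (HU : forall (A B : Alg T) (e : AlgHom A B),
          regular_epi e -> epi (ah e) /\ epi (fmap T (ah e)))
  (HEU : forall (A B : Alg T) (e : AlgHom A B), regular_epi e -> epi (fmap E (ah e)))
  (quot : forall A : Alg T, {Q : Alg T & AlgHom A Q})
  (Hquot : chosen_coequalizers l r quot).

Local Notation T' := (quotient_monad HT l r quot Hl Hr Hquot HEU).
Local Notation q := (qmap HT quot).

Lemma q_natural {X Y : C} (f : hom X Y) : fmap T' f ∘ q X = q Y ∘ fmap T f.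
Proof. exact (coeq_factorK (Hquot _) _ (Lmap_coeq HT l r quot Hl Hr Hquot f)). Qed.

Lemma q_alg_comm (X : C) : q X ∘ mmult T X = act (Lalg HT quot X) ∘ fmap T (q X).
Proof. exact (ah_comm (projT2 (quot (freeAlg HT X)))). Qed.

Lemma quotient_mult_q (X : C) : mmult T' X ∘ q (T' X) = act (Lalg HT quot X).
Proof.
  exact (coeq_factorK (Hquot _) _ (eps_coeq HT l r Hl Hr _ (LE HT l r quot Hl Hr Hquot HEU X))).
Qed.

Lemma q_mult (X : C) : q X ∘ mmult T X = mmult T' X ∘ fmap T' (q X) ∘ q (T X).
Proof. rewrite q_alg_comm, <- quotient_mult_q. rassoc. now rewrite q_natural. Qed.

Lemma q_monad_morphism : is_monad_morphism T T' q.
Proof.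
  split; [|split].
  - intros X Y f. symmetry. apply q_natural.
  - reflexivity.
  - exact q_mult.
Qed.

Lemma quotient_regular_epi (X : C) : regular_epi (projT2 (quot (freeAlg HT X))).
Proof.
  exists (freeAlg HT (E (T X))),
    (ext_alg HT (freeAlg HT X) (l _)), (ext_alg HT (freeAlg HT X) (r _)).
  exact (Hquot (freeAlg HT X)).
Qed.

Lemma q_epi (X : C) : epi (q X).
Proof. exact (proj1 (HU _ _ _ (quotient_regular_epi X))). Qed.

Lemma fmap_q_epi (X : C) : epi (fmap T (q X)).
Proof. exact (proj2 (HU _ _ _ (quotient_regular_epi X))). Qed.

Lemma q_identifies_eqs (X : C) : q X ∘ l X = q X ∘ r X.
Proof.
  rewrite <- (free_pair_at_units HT l Hl X), <- (free_pair_at_units HT r Hr X).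
  pose proof (proj1 (Hquot (freeAlg HT X))) as Hcoeq.
  rewrite !cmp_assoc in Hcoeq. rewrite !cmp_assoc. now rewrite Hcoeq.
Qed.

Section DistLawDescends.
Context {F : Functor C} (HF : is_functor F)
  (lam : forall X : C, hom (T (F X)) (F (T X))) (Hlam : is_dist_law T F lam).

Definition lift_q_hom (X : C) :
  AlgHom (freeAlg HT (F X)) (lift_alg HT HF lam Hlam (Lalg HT quot X)) :=
  alg_comp HT (lift_hom HT HF lam Hlam (projT2 (quot (freeAlg HT X))))
    (dist_law_hom HT HF lam Hlam X).

Lemma lift_q_mult_factor (k : forall X : C, hom (E X) (T X))
  (Hk : is_natural (F := E) (G := T) k) (X : C) :
  fmap F (q X) ∘ lam X ∘ mmult T (F X) ∘ k (T (F X)) =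
  fmap F (mmult T' X ∘ fmap T' (q X)) ∘ (fmap F (q (T X)) ∘ lam (T X) ∘ k (F (T X)))
    ∘ fmap E (lam X).
Proof.
  rassoc. crewrite (proj2 (proj2 Hlam) X). crewrite (fmap_cmp HF (q X) (mmult T X)).
  rewrite q_mult, !(fmap_comp _ HF). rassoc. now rewrite Hk.
Qed.

Section Preserved.
Hypothesis Hpres : forall X : C,
  fmap F (q X) ∘ lam X ∘ l (F X) = fmap F (q X) ∘ lam X ∘ r (F X).

Lemma lift_q_coequalizes (X : C) :
  ah (lift_q_hom X) ∘ (mmult T (F X) ∘ mmult T (T (F X)) ∘ fmap T (l (T (F X)))) =
  ah (lift_q_hom X) ∘ (mmult T (F X) ∘ mmult T (T (F X)) ∘ fmap T (r (T (F X)))).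
Proof.
  rewrite !(free_hom_pair HT).
  cbn [ah lift_q_hom alg_comp lift_hom dist_law_hom].
  now rewrite (lift_q_mult_factor l Hl), (lift_q_mult_factor r Hr), Hpres.
Qed.

Definition descended_law (X : C) : hom (T' (F X)) (F (T' X)) :=
  ah (coeq_factor (Hquot (freeAlg HT (F X))) (lift_q_hom X) (lift_q_coequalizes X)).

Lemma descended_law_q (X : C) : descended_law X ∘ q (F X) = fmap F (q X) ∘ lam X.
Proof. exact (coeq_factorK (Hquot (freeAlg HT (F X))) _ (lift_q_coequalizes X)). Qed.

Lemma descended_law_natural {X Y : C} (f : hom X Y) :
  descended_law Y ∘ fmap T' (fmap F f) = fmap F (fmap T' f) ∘ descended_law X.
Proof.
  apply (q_epi (F X)). rassoc.
  rewrite q_natural. crewrite (descended_law_q Y). rewrite (proj1 Hlam).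
  crewrite (fmap_cmp HF (q Y) (fmap T f)). rewrite <- q_natural, (fmap_comp _ HF). rassoc.
  now rewrite descended_law_q.
Qed.

Lemma descended_law_unit (X : C) :
  descended_law X ∘ munit T' (F X) = fmap F (munit T' X).
Proof.
  cbn [munit quotient_monad]. unfold Tq_unit. rassoc.
  crewrite (descended_law_q X). rewrite (proj1 (proj2 Hlam)). apply (fmap_cmp HF).
Qed.

Lemma descended_law_mult (X : C) :
  descended_law X ∘ mmult T' (F X) =
  fmap F (mmult T' X) ∘ descended_law (T' X) ∘ fmap T' (descended_law X).
Proof.
  apply (epi_cmp _ _ (q_epi (T' (F X))) (fmap_q_epi (F X))). rassoc.
  crewrite (quotient_mult_q (F X)). crewrite (eq_sym (q_alg_comm (F X))).
  crewrite (descended_law_q X). crewrite (proj2 (proj2 Hlam) X).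
  crewrite (fmap_cmp HF (q X) (mmult T X)). rewrite q_mult, !(fmap_comp _ HF). rassoc.
  crewrite (q_natural (descended_law X)). crewrite (descended_law_q (T' X)).
  crewrite (fmap_cmp (mon_functor _ HT) (descended_law X) (q (F X))).
  rewrite descended_law_q, (fmap_comp _ (mon_functor _ HT)). rassoc.
  crewrite (proj1 Hlam _ _ (q X)). crewrite (fmap_cmp HF (q (T' X)) (fmap T (q X))).
  rewrite <- q_natural, (fmap_comp _ HF _ _ _ (fmap T' (q X))). now rassoc.
Qed.

Lemma descended_law_dist_law : is_dist_law T' F descended_law.
Proof.
  split; [|split].
  - exact (@descended_law_natural).
  - exact descended_law_unit.
  - exact descended_law_mult.
Qed.

End Preserved.
End DistLawDescends.
End QuotientMonad.

Theorem theorem4p3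
  (C : Category)
  (Sigma : Functor C) (HSigma : is_functor Sigma)
  (T : Monad C) (HT : is_monad T) (Hfree : is_free_monad Sigma T)
  (E : Functor C) (HE : is_functor E)
  (l r : forall X : C, hom (E X) (T X))
  (Hl : is_natural (F := E) (G := T) l) (Hr : is_natural (F := E) (G := T) r)
  (* standing assumption 1 *)
  (Hcoeq : alg_has_coequalizers T)
  (* standing assumption 2 *)
  (HU : forall (A B : Alg T) (e : AlgHom A B),
          regular_epi e -> epi (ah e) /\ epi (fmap T (ah e)))
  (* standing assumption 3 *)
  (HEU : forall (A B : Alg T) (e : AlgHom A B), regular_epi e -> epi (fmap E (ah e)))
  (* the chosen coequalizers s_A : A -> A/E *)
  (quot : forall A : Alg T, {Q : Alg T & AlgHom A Q})
  (Hquot : chosen_coequalizers l r quot)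
  (Hquot_id : forall A : Alg T, satisfies_eqs l r A ->
                quot A = existT (fun Q => AlgHom A Q) A (alg_id HT A))
  (F : Functor C) (HF : is_functor F)
  (lam : forall X : C, hom (T (F X)) (F (T X)))
  (Hlam : is_dist_law T F lam) :
  (forall X : C,
     fmap F (qmap HT quot X) ∘ lam X ∘ l (F X) =
     fmap F (qmap HT quot X) ∘ lam X ∘ r (F X))
  <->
  (exists lam' : forall X : C,
       hom (quotient_monad HT l r quot Hl Hr Hquot HEU (F X))
           (F (quotient_monad HT l r quot Hl Hr Hquot HEU X)),
     is_dist_law (quotient_monad HT l r quot Hl Hr Hquot HEU) F lam' /\
     is_dist_law_morphism T (quotient_monad HT l r quot Hl Hr Hquot HEU) F
       lam lam' (qmap HT quot) /\
     (forall lam'' : forall X : C,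
         hom (quotient_monad HT l r quot Hl Hr Hquot HEU (F X))
             (F (quotient_monad HT l r quot Hl Hr Hquot HEU X)),
        is_dist_law (quotient_monad HT l r quot Hl Hr Hquot HEU) F lam'' ->
        is_dist_law_morphism T (quotient_monad HT l r quot Hl Hr Hquot HEU) F
          lam lam'' (qmap HT quot) ->
        forall X, lam'' X = lam' X)).
Proof.
  split.
  - intros Hpres.
    exists (descended_law HT l r Hl Hr HEU quot Hquot HF lam Hlam Hpres).
    split; [|split].
    + exact (descended_law_dist_law HT l r Hl Hr HU HEU quot Hquot HF lam Hlam Hpres).
    + split; [apply q_monad_morphism | apply descended_law_q].
    + intros lam'' _ [_ Hlam''] X.
      apply (q_epi HT l r HU quot Hquot (F X)).
      rewrite Hlam''. symmetry. apply descended_law_q.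
  - intros [lam' [_ [[_ Hlam'] _]]] X.
    rewrite <- (Hlam' X), <- !cmp_assoc.
    now rewrite (q_identifies_eqs HT l r Hl Hr quot Hquot (F X)).
Qed.
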